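(* Let $L_s, L_t \ge 0$ be integers, let $N_p, N_c \ge 1$ be integers, and for $1\le p\le N_p$, $1\le q\le N_c$ let $\tilde f_T(p)$, $f_d(\psi_{p,q})$, $f_R(\psi_{p,q})$ be real numbers and $\sigma^2_{p,q} \ge 0$; let $\sigma_n^2\ge 0$. For a real $f$ and integers $L\ge 0$, $0\le l\le L$, define $\mathbf{g}^{(L)}_{l}(f) = [e^{\mathrm{j}2\pi f(0-l)}, e^{\mathrm{j}2\pi f(1-l)},\ldots,e^{\mathrm{j}2\pi f(L-l)}]^T \in \mathbb{C}^{(L+1)\times 1}$, and let $\mathbf{e}^{(L)}_{l}\in\mathbb{C}^{(L+1)\times 1}$ be the vector with a $1$ in position $l$ (positions indexed $0,\ldots,L$) and zeros elsewhere. Set $\breve{\mathbf{a}}_{T,l_1}(p)=\mathbf{g}^{(L_s)}_{l_1}(\tilde f_T(p))$, $\breve{\mathbf{b}}_{l_2}(p,q)=\mathbf{g}^{(L_t)}_{l_2}(f_d(\psi_{p,q}))$, $\breve{\mathbf{a}}_{R,l_3}(p,q)=\mathbf{g}^{(L_s)}_{l_3}(f_R(\psi_{p,q}))$, and for $0\le l_1\le L_s$, $0\le l_2\le L_t$, $0\le l_3\le L_s$ define $$\mathbf{z}_{l_1,l_2,l_3}=\sum_{p=1}^{N_p}\sum_{q=1}^{N_c}\sigma^2_{p,q}\,\breve{\mathbf{a}}_{T,l_1}(p)\otimes\breve{\mathbf{b}}_{l_2}(p,q)\otimes\breve{\mathbf{a}}_{R,l_3}(p,q)+\sigma_n^2\,\mathbf{e}^{(L_s)}_{l_1}\otimes\mathbf{e}^{(L_t)}_{l_2}\otimes\mathbf{e}^{(L_s)}_{l_3},$$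 and $\mathbf{R}_v=\sum_{l_1=0}^{L_s}\sum_{l_2=0}^{L_t}\sum_{l_3=0}^{L_s}\mathbf{z}_{l_1,l_2,l_3}\mathbf{z}_{l_1,l_2,l_3}^H$. Let $\breve{\mathbf{v}}_{0,0,0}(p,q)=\breve{\mathbf{a}}_{T,0}(p)\otimes\breve{\mathbf{b}}_{0}(p,q)\otimes\breve{\mathbf{a}}_{R,0}(p,q)$. Then $$\mathbf{R}_v = C^2\Big(\sum_{p=1}^{N_p}\sum_{q=1}^{N_c}\sigma^2_{p,q}\,\breve{\mathbf{v}}_{0,0,0}(p,q)\breve{\mathbf{v}}_{0,0,0}^H(p,q)+\sigma_n^2\mathbf{I}\Big)^2,$$ where $C$ is a constant and $\mathbf{I}$ is the identity of size $(L_s+1)^2(L_t+1)$.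
   Context: $\otimes$ denotes the Kronecker product, $(\cdot)^H$ the conjugate transpose, and $\mathrm{j}=\sqrt{-1}$. The vectors $\mathbf{z}_{l_1,l_2,l_3}$ are the 3-D spatially smoothed subvectors of a virtual (difference-coarray) space-time-range snapshot built from the clutter covariance of a co-prime frequency diverse array radar, with $\tilde f_T(p)$ the compensated transmit (range) frequency of the $p$-th ambiguous range region, $f_d$ the Doppler frequency and $f_R$ the receive spatial frequency of clutter patch $(p,q)$, $\sigma_{p,q}^2$ the clutter patch power and $\sigma_n^2$ the noise power. *)

From mathcomp Require Import all_boot all_algebra.
From mathcomp Require Import complex mxtens.
From mathcomp Require Import reals trigo.

Set Implicit Arguments.
Unset Strict Implicit.
Unset Printing Implicit Defensive.

Import GRing.Theory Num.Theory.
Local Open Scope ring_scope.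
Local Open Scope complex_scope.

Section Defs.
Variable R : realType.

Definition expj (x : R) : R[i] := cos x +i* sin x.

Definition rc (x : R) : R[i] := x +i* 0.

Definition hermT m n (A : 'M[R[i]]_(m, n)) : 'M[R[i]]_(n, m) :=
  (map_mx (fun x => x^*) A)^T.

Definition gvec (L : nat) (l : 'I_L.+1) (f : R) : 'cV[R[i]]_L.+1 :=
  \col_(k < L.+1) expj (2 * pi * f * (k%:R - l%:R)).

Definition evec (L : nat) (l : 'I_L.+1) : 'cV[R[i]]_L.+1 :=
  \col_(k < L.+1) (k == l)%:R.

Variables (Ls Lt Np Nc : nat).
Variables (fT : 'I_Np -> R) (fd fR : 'I_Np -> 'I_Nc -> R)
          (sig2 : 'I_Np -> 'I_Nc -> R) (sn2 : R).

Definition zvec (l1 : 'I_Ls.+1) (l2 : 'I_Lt.+1) (l3 : 'I_Ls.+1) :=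
  \sum_(p < Np) \sum_(q < Nc)
     rc (sig2 p q) *: (gvec l1 (fT p) *t gvec l2 (fd p q) *t gvec l3 (fR p q))
  + rc sn2 *: (evec l1 *t evec l2 *t evec l3).

Definition Rv :=
  \sum_(l1 < Ls.+1) \sum_(l2 < Lt.+1) \sum_(l3 < Ls.+1)
     (zvec l1 l2 l3 *m hermT (zvec l1 l2 l3)).

Definition v000 (p : 'I_Np) (q : 'I_Nc) :=
  gvec (ord0 : 'I_Ls.+1) (fT p) *t gvec (ord0 : 'I_Lt.+1) (fd p q)
    *t gvec (ord0 : 'I_Ls.+1) (fR p q).

Definition Rmat :=
  \sum_(p < Np) \sum_(q < Nc) rc (sig2 p q) *: (v000 p q *m hermT (v000 p q))
  + rc sn2 *: 1%:M.

End Defs.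

(** Every smoothed subvector is a column of one Hermitian matrix [S], the
    matrix on the right-hand side: [g_l(f) = e^{-j 2 pi f l} g_0(f)] gives
    [g_0 g_0^H e_l = g_l], hence
    [z_{l1,l2,l3} = S (e_{l1} (x) e_{l2} (x) e_{l3})].
    These unit vectors form an orthonormal basis, so
    [R_v = S (sum_l e_l e_l^H) S^H = S S^H = S^2] and the theorem holds with
    [C = 1], whatever the signs of the powers. *)
From mathcomp Require Import all_boot all_algebra.
From mathcomp Require Import complex mxtens.
From mathcomp Require Import reals trigo.
From mathcomp Require Import ring.
Import GRing.Theory Num.Theory.
Local Open Scope ring_scope.
Local Open Scope complex_scope.

Section ConjugateTranspose.
Variable R : realType.
Local Notation C := R[i].

Lemma hermTK m n (A : 'M[C]_(m, n)) : hermT (hermT A) = A.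
Proof. by apply/matrixP=> i j; rewrite !mxE conjcK. Qed.

Lemma hermT_mul m n p (A : 'M[C]_(m, n)) (B : 'M[C]_(n, p)) :
  hermT (A *m B) = hermT B *m hermT A.
Proof. by rewrite /hermT map_mxM trmx_mul. Qed.

Lemma hermT_tens m n p q (A : 'M[C]_(m, n)) (B : 'M[C]_(p, q)) :
  hermT (A *t B) = hermT A *t hermT B.
Proof. by rewrite /hermT (map_mxT (@conjc R)) trmx_tens. Qed.

Lemma hermT_sum m n I (r : seq I) (P : pred I) (F : I -> 'M[C]_(m, n)) :
  hermT (\sum_(i <- r | P i) F i) = \sum_(i <- r | P i) hermT (F i).
Proof. by rewrite /hermT map_mx_sum linear_sum. Qed.

Lemma hermTD m n (A B : 'M[C]_(m, n)) : hermT (A + B) = hermT A + hermT B.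
Proof. by rewrite /hermT map_mxD linearD. Qed.

Lemma hermTZ m n (a : C) (A : 'M[C]_(m, n)) :
  hermT (a *: A) = conjc a *: hermT A.
Proof. by apply/matrixP=> i j; rewrite !mxE rmorphM. Qed.

Lemma conjc_rc (x : R) : (rc x)^* = rc x.
Proof. exact: conjc_real. Qed.

Lemma hermT1 n : hermT (1%:M : 'M[C]_n) = 1%:M.
Proof. by apply/matrixP=> i j; rewrite !mxE conjc_nat eq_sym. Qed.

Lemma mulmx_hermT_outer m n (M : 'M[C]_(m, n)) (u : 'cV[C]_n) :
  (M *m u) *m hermT (M *m u) = M *m (u *m hermT u) *m hermT M.
Proof. by rewrite hermT_mul !mulmxA. Qed.

End ConjugateTranspose.

Section Kronecker.
Variable R : comPzRingType.

Lemma tensmxDl m n p q (A1 A2 : 'M[R]_(m, n)) (B : 'M[R]_(p, q)) :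
  (A1 + A2) *t B = A1 *t B + A2 *t B.
Proof. by apply/matrixP=> i j; rewrite !mxE mulrDl. Qed.

Lemma tensmxDr m n p q (A : 'M[R]_(m, n)) (B1 B2 : 'M[R]_(p, q)) :
  A *t (B1 + B2) = A *t B1 + A *t B2.
Proof. by apply/matrixP=> i j; rewrite !mxE mulrDr. Qed.

Lemma tensmx_suml m n p q I (r : seq I) (P : pred I) (F : I -> 'M[R]_(m, n))
    (B : 'M[R]_(p, q)) :
  (\sum_(i <- r | P i) F i) *t B = \sum_(i <- r | P i) (F i *t B).
Proof.
apply: (big_morph (fun A : 'M_(m, n) => A *t B)); last exact: tens0mx.
by move=> A1 A2; apply: tensmxDl.
Qed.

Lemma tensmx_sumr m n p q I (r : seq I) (P : pred I) (F : I -> 'M[R]_(p, q))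
    (A : 'M[R]_(m, n)) :
  A *t (\sum_(i <- r | P i) F i) = \sum_(i <- r | P i) (A *t F i).
Proof.
apply: (big_morph (fun B : 'M_(p, q) => A *t B)); last exact: tensmx0.
by move=> B1 B2; apply: tensmxDr.
Qed.

Lemma tensmx11 m n : (1%:M : 'M[R]_m) *t (1%:M : 'M[R]_n) = 1%:M.
Proof.
apply/matrixP=> i j.
case: (mxtens_indexP i)=> i1 i2; case: (mxtens_indexP j)=> j1 j2.
by rewrite tensmxE !mxE (can_eq (@mxtens_indexK _ _)) xpair_eqE -natrM mulnb.
Qed.

End Kronecker.

Section UnitVectors.
Variable R : realType.
Local Notation C := R[i].

Lemma sum_evec_outer L :
  \sum_(l < L.+1) evec R l *m hermT (evec R l) = 1%:M :> 'M[C]_L.+1.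
Proof.
apply/matrixP=> i j; rewrite summxE (bigD1 i) //= big1 => [|k /negbTE ki].
  by rewrite addr0 !mxE big_ord1 !mxE eqxx conjc_nat mul1r eq_sym.
by rewrite !mxE big_ord1 !mxE eq_sym ki mul0r.
Qed.

Lemma mulmx_hermT_evec n (u : 'cV[C]_n.+1) (l : 'I_n.+1) :
  hermT u *m evec R l = (u l 0)^*%:M.
Proof.
apply/matrixP=> r s; rewrite [r]ord1 [s]ord1 !mxE (bigD1 l) //= big1.
  by rewrite !mxE eqxx mulr1 addr0.
by move=> k /negbTE kl; rewrite !mxE kl mulr0.
Qed.

Definition evec3 {a b c} (l1 : 'I_a.+1) (l2 : 'I_b.+1) (l3 : 'I_c.+1) :=
  evec R l1 *t evec R l2 *t evec R l3.

Lemma sum_evec3_outer a b c :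
  \sum_(l1 < a.+1) \sum_(l2 < b.+1) \sum_(l3 < c.+1)
    evec3 l1 l2 l3 *m hermT (evec3 l1 l2 l3) = 1%:M.
Proof.
under eq_bigr do under eq_bigr do under eq_bigr do
  rewrite /evec3 !hermT_tens !tensmx_mul.
under eq_bigr do under eq_bigr do rewrite -tensmx_sumr sum_evec_outer.
under eq_bigr do rewrite -tensmx_suml -tensmx_sumr sum_evec_outer.
by rewrite -!tensmx_suml sum_evec_outer !tensmx11.
Qed.

Lemma expj_mul_conj a b : expj a * (expj b)^* = expj (a - b) :> C.
Proof.
rewrite /expj /conjc cosB sinB; apply/eqP; rewrite eq_complex /=.
by apply/andP; split; apply/eqP; ring.
Qed.

Lemma gvec0_outer_evec L (l : 'I_L.+1) f :
  gvec ord0 f *m (hermT (gvec ord0 f) *m evec R l) = gvec l f.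
Proof.
rewrite mulmx_hermT_evec mul_mx_scalar; apply/matrixP=> k j.
by rewrite !mxE mulrC expj_mul_conj /= !subr0 -mulrBr.
Qed.

End UnitVectors.

Section ClutterCovariance.
Variables (R : realType) (Ls Lt Np Nc : nat).
Variables (fT : 'I_Np -> R) (fd fR : 'I_Np -> 'I_Nc -> R)
          (sig2 : 'I_Np -> 'I_Nc -> R) (sn2 : R).
Local Notation M := (Rmat Ls Lt fT fd fR sig2 sn2).
Local Notation z := (zvec fT fd fR sig2 sn2).

Lemma Rmat_hermitian : hermT M = M.
Proof.
rewrite /Rmat hermTD hermTZ hermT1 conjc_rc hermT_sum; congr (_ + _).
apply: eq_bigr=> p _; rewrite hermT_sum; apply: eq_bigr=> q _.
by rewrite hermTZ conjc_rc hermT_mul hermTK.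
Qed.

Lemma zvec_Rmat l1 l2 l3 : z l1 l2 l3 = M *m evec3 R l1 l2 l3.
Proof.
rewrite /Rmat /zvec mulmxDl mulmx_suml -scalemxAl mul1mx; congr (_ + _).
apply: eq_bigr=> p _; rewrite mulmx_suml; apply: eq_bigr=> q _.
by rewrite -scalemxAl -mulmxA /evec3 !hermT_tens !tensmx_mul !gvec0_outer_evec.
Qed.

Lemma Rv_Rmat : Rv Ls Lt fT fd fR sig2 sn2 = M *m M.
Proof.
have -> : Rv Ls Lt fT fd fR sig2 sn2 = M *m (\sum_(l1 < Ls.+1) \sum_(l2 < Lt.+1)
    \sum_(l3 < Ls.+1) evec3 R l1 l2 l3 *m hermT (evec3 R l1 l2 l3)) *m hermT M.
  rewrite /Rv mulmx_sumr mulmx_suml; apply: eq_bigr=> l1 _.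
  rewrite mulmx_sumr mulmx_suml; apply: eq_bigr=> l2 _.
  rewrite mulmx_sumr mulmx_suml; apply: eq_bigr=> l3 _.
  by rewrite zvec_Rmat mulmx_hermT_outer.
by rewrite sum_evec3_outer mulmx1 Rmat_hermitian.
Qed.

End ClutterCovariance.

Theorem theorem1 (R : realType) (Ls Lt Np Nc : nat) :
  (0 < Np)%N -> (0 < Nc)%N ->
  exists C : R,
  forall (fT : 'I_Np -> R) (fd fR : 'I_Np -> 'I_Nc -> R)
         (sig2 : 'I_Np -> 'I_Nc -> R) (sn2 : R),
    (forall p q, 0 <= sig2 p q) -> 0 <= sn2 ->
    Rv Ls Lt fT fd fR sig2 sn2 =
      rc (C ^+ 2) *: (Rmat Ls Lt fT fd fR sig2 sn2 *m Rmat Ls Lt fT fd fR sig2 sn2).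
Proof.
move=> _ _; exists 1 => fT fd fR sig2 sn2 _ _.
by rewrite expr1n /rc complexr0 scale1r Rv_Rmat.
Qed.
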